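(* For each $n$ let $N_n=(N_{n,1},\ldots,N_{n,M_n})$ be multinomially distributed with parameters $(n,p_{n,1},\ldots,p_{n,M_n})$, where $\liminf_{n\to\infty}n\min_m p_{n,m}>0$. If $\alpha_{n,m}$ are real numbers with $\sum_m|\alpha_{n,m}|=O(1)$ and $\max_m|\alpha_{n,m}|\to0$ as $n\to\infty$, then $$\sum_m\alpha_{n,m}\Big(\frac{N_{n,m}(N_{n,m}-1)}{n(n-1)p_{n,m}^2}-1\Big)\to0\quad\text{in probability}.$$ *)

From HB Require Import structures.
From mathcomp Require Import all_boot all_order all_algebra.
From mathcomp Require Import all_classical all_reals all_analysis.
Set Implicit Arguments. Unset Strict Implicit. Unset Printing Implicit Defensive.
Import Order.TTheory GRing.Theory Num.Theory.
Local Open Scope ring_scope.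

(* A multinomial(n, p_1..p_M) vector is realised as the count vector of
   n independent draws with values in 'I_M, each drawn with law p.
   An outcome is x : {ffun 'I_n -> 'I_M}, of probability \prod_i p (x i). *)

Definition count_of (n M : nat) (x : {ffun 'I_n -> 'I_M}) (m : 'I_M) : nat :=
  #|[set i | x i == m]|.

Definition prob_draws {R : realType} (n M : nat) (p : 'I_M -> R)
  (E : pred {ffun 'I_n -> 'I_M}) : R :=
  \sum_(x : {ffun 'I_n -> 'I_M} | E x) \prod_(i < n) p (x i).

Definition stat {R : realType} (n M : nat) (p alpha : 'I_M -> R)
  (x : {ffun 'I_n -> 'I_M}) : R :=
  \sum_(m < M) alpha m *
    (((count_of x m)%:R * ((count_of x m)%:R - 1)) /
       (n%:R * (n%:R - 1) * (p m) ^+ 2) - 1).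

(* Write N_m - n p_m = sum_i d_m(x_i) with the centred indicators d_m(y) = [y = m] - p_m.
   Expanding N_m (N_m - 1) in these turns the statistic into A + B, where
   A = sum_i u(x_i) is a sum of i.i.d. centred terms and B = sum_(i <> j) h(x_i, x_j)
   is a degenerate U-statistic.  Independence of the draws gives
   E[A^2] = n E[u^2] = O(sum_m alpha_m^2) and
   E[B^2] = 2 n (n - 1) E[h^2] = O(sum_m alpha_m^2 + (sum_m |alpha_m|)^2 / n^2),
   using n p_m >= c.  Since sum_m alpha_m^2 <= max_m |alpha_m| * sum_m |alpha_m| -> 0,
   the second moment of the statistic tends to 0, and Chebyshev's inequality concludes. *)

From HB Require Import structures.
From mathcomp Require Import all_boot all_order all_algebra.
From mathcomp Require Import all_classical all_reals all_analysis.
From mathcomp Require Import ring lra.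
Import Order.TTheory GRing.Theory Num.Theory numFieldNormedType.Exports.
Local Open Scope ring_scope.

Set Implicit Arguments. Unset Strict Implicit. Unset Printing Implicit Defensive.

Section IndexSums.
Variables (R : realType) (n : nat).

Lemma sum_delta_l (j : 'I_n) (F : 'I_n -> R) : \sum_(i < n) (i == j)%:R * F i = F j.
Proof.
by rewrite (bigD1 j) //= eqxx mul1r big1 ?addr0 // => i /negbTE ->; rewrite mul0r.
Qed.

Lemma sum_delta_r (j : 'I_n) (F : 'I_n -> R) : \sum_(i < n) (j == i)%:R * F i = F j.
Proof. by under eq_bigr do rewrite eq_sym; apply: sum_delta_l. Qed.

Lemma sum_neq (i : 'I_n) : \sum_(j < n) ((i != j)%:R : R) = n%:R - 1.
Proof.
transitivity (\sum_(j < n) (1 - (i == j)%:R * 1 : R)).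
  by apply: eq_bigr => j _; case: (i == j); rewrite /= ?mulr1 ?subr0 ?subrr.
by rewrite sumrB sum_delta_r sumr_const card_ord.
Qed.

Lemma sum_offdiag_mul (v : 'I_n -> R) :
  \sum_(i < n) \sum_(j < n) (i != j)%:R * (v i * v j) =
  (\sum_(i < n) v i) ^+ 2 - \sum_(i < n) v i ^+ 2.
Proof.
rewrite expr2 mulr_suml -sumrB; apply: eq_bigr => i _.
rewrite mulr_sumr (bigD1 i) //= eqxx mul0r add0r.
rewrite [X in _ = X - _](bigD1 i) //= expr2 addrAC subrr add0r.
by apply: eq_bigr => j ji; rewrite eq_sym ji mul1r.
Qed.

Lemma sum_offdiag_pair (i j : 'I_n) : i != j ->
  \sum_(k < n) \sum_(l < n) (k != l)%:R *
     (((k == i) && (l == j))%:R + ((k == j) && (l == i))%:R) = 2 :> R.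
Proof.
move=> ij.
transitivity (\sum_(k < n) ((k == i)%:R * (k != j)%:R + (k == j)%:R * (k != i)%:R) : R).
  apply: eq_bigr => k _.
  transitivity (\sum_(l < n) ((l == j)%:R * ((k != l)%:R * (k == i)%:R) +
                              (l == i)%:R * ((k != l)%:R * (k == j)%:R)) : R).
    apply: eq_bigr => l _.
    by case: (k == i); case: (l == j); case: (k == j); case: (l == i); case: (k != l);
      rewrite /= ?mul0r ?mulr0 ?mul1r ?mulr1 ?addr0 ?add0r.
  by rewrite big_split /= !sum_delta_l mulrC [X in _ + X]mulrC.
by rewrite big_split /= !sum_delta_l ij eq_sym ij.
Qed.

End IndexSums.

Section ProductLaw.
Variables (R : realType) (M : nat) (p : 'I_M -> R).

Definition Edraw (g : 'I_M -> R) : R := \sum_(y < M) p y * g y.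

Definition Edraws n (f : {ffun 'I_n -> 'I_M} -> R) : R :=
  \sum_(x : {ffun 'I_n -> 'I_M}) (\prod_(i < n) p (x i)) * f x.

Lemma eq_Edraw (f g : 'I_M -> R) : f =1 g -> Edraw f = Edraw g.
Proof. by move=> fg; apply: eq_bigr => y _; rewrite fg. Qed.

Lemma Edraw_sum (I : finType) (c : I -> R) (f : I -> 'I_M -> R) :
  Edraw (fun y => \sum_(k : I) c k * f k y) = \sum_(k : I) c k * Edraw (f k).
Proof.
rewrite /Edraw; under eq_bigr do rewrite mulr_sumr.
rewrite exchange_big /=; apply: eq_bigr => k _; rewrite mulr_sumr.
by apply: eq_bigr => y _; rewrite mulrCA.
Qed.

Lemma eq_Edraws n (f g : {ffun 'I_n -> 'I_M} -> R) : f =1 g -> Edraws f = Edraws g.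
Proof. by move=> fg; apply: eq_bigr => x _; rewrite fg. Qed.

Lemma Edraws_prod n (F : 'I_n -> 'I_M -> R) :
  Edraws (fun x => \prod_(i < n) F i (x i)) = \prod_(i < n) Edraw (F i).
Proof.
rewrite /Edraws /Edraw bigA_distr_bigA; apply: eq_bigr => x _.
by rewrite -big_split.
Qed.

Lemma Edraws_sum n (I : finType) (f : I -> {ffun 'I_n -> 'I_M} -> R) :
  Edraws (fun x => \sum_(k : I) f k x) = \sum_(k : I) Edraws (f k).
Proof.
rewrite /Edraws exchange_big /=; apply: eq_bigr => x _.
by rewrite mulr_sumr.
Qed.

Lemma EdrawsZ n c (f : {ffun 'I_n -> 'I_M} -> R) :
  Edraws (fun x => c * f x) = c * Edraws f.
Proof. by rewrite /Edraws mulr_sumr; apply: eq_bigr => x _; rewrite mulrCA. Qed.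

Lemma EdrawsD n (f g : {ffun 'I_n -> 'I_M} -> R) :
  Edraws (fun x => f x + g x) = Edraws f + Edraws g.
Proof. by rewrite /Edraws -big_split; apply: eq_bigr => x _; rewrite mulrDr. Qed.

Hypothesis p_ge0 : forall m, 0 <= p m.

Lemma ler_Edraws n (f g : {ffun 'I_n -> 'I_M} -> R) :
  (forall x, f x <= g x) -> Edraws f <= Edraws g.
Proof.
move=> fg; apply: ler_sum => x _; apply: ler_wpM2l => //.
exact: prodr_ge0.
Qed.

Lemma prob_draws_ge0 n (E : pred {ffun 'I_n -> 'I_M}) : 0 <= prob_draws p E.
Proof. by apply: sumr_ge0 => x _; apply: prodr_ge0. Qed.

Lemma prob_draws_gt_le n (f : {ffun 'I_n -> 'I_M} -> R) (eps : R) : 0 < eps ->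
  prob_draws p (fun x => eps < `|f x|) <= Edraws (fun x => f x ^+ 2) / eps ^+ 2.
Proof.
move=> eps_gt0; rewrite /prob_draws /Edraws mulr_suml.
rewrite [X in _ <= X](bigID (fun x => eps < `|f x|)) /= -[X in X <= _]addr0.
apply: lerD; last first.
  apply: sumr_ge0 => x _.
  by rewrite mulr_ge0 ?invr_ge0 ?sqr_ge0 // mulr_ge0 ?sqr_ge0 // prodr_ge0.
apply: ler_sum => x fx_gt; rewrite -mulrA ler_peMr ?prodr_ge0 //.
rewrite ler_pdivlMr ?exprn_gt0 // mul1r -(real_normK (num_real (f x))).
by rewrite ler_pXn2r ?nnegrE ?ltW // (lt_trans eps_gt0 fx_gt).
Qed.

Hypothesis p_sum1 : \sum_(m < M) p m = 1.

Lemma Edraw1 : Edraw (fun=> 1) = 1.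
Proof. by rewrite /Edraw; under eq_bigr do rewrite mulr1. Qed.

Lemma Edraw_var_le (g : 'I_M -> R) :
  Edraw (fun y => (g y - Edraw g) ^+ 2) <= Edraw (fun y => g y ^+ 2).
Proof.
set mu := Edraw g; have muE : \sum_(y < M) p y * g y = mu by [].
have -> : Edraw (fun y => (g y - mu) ^+ 2) = Edraw (fun y => g y ^+ 2) - mu ^+ 2.
  rewrite /Edraw; transitivity (\sum_(y < M)
    (p y * g y ^+ 2 - 2 * mu * (p y * g y) + mu ^+ 2 * p y)).
    by apply: eq_bigr => y _; ring.
  by rewrite !big_split /= sumrN -!mulr_sumr p_sum1 muE; ring.
by rewrite lerBlDr lerDl sqr_ge0.
Qed.

(* [f (x i)] as a product over all coordinates, so that [Edraws_prod] applies. *)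
Definition at_coord n (i : 'I_n) (f : 'I_M -> R) (t : 'I_n) (y : 'I_M) : R :=
  if t == i then f y else 1.

Lemma prod_at_coord n (i : 'I_n) f (x : {ffun 'I_n -> 'I_M}) :
  \prod_(t < n) at_coord i f t (x t) = f (x i).
Proof. by rewrite /at_coord -big_mkcond big_pred1_eq. Qed.

Lemma prod_Edraw1 n (F : 'I_n -> 'I_M -> R) (i : 'I_n) :
  (forall t, t != i -> F t =1 fun=> 1) ->
  \prod_(t < n) Edraw (F t) = Edraw (F i).
Proof.
move=> F1; rewrite (bigD1 i) //= big1 ?mulr1 // => t ti.
by rewrite (eq_Edraw (F1 t ti)) Edraw1.
Qed.

Lemma prod_Edraw2 n (F : 'I_n -> 'I_M -> R) (i j : 'I_n) : i != j ->
  (forall t, t != i -> t != j -> F t =1 fun=> 1) ->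
  \prod_(t < n) Edraw (F t) = Edraw (F i) * Edraw (F j).
Proof.
move=> ij F1; rewrite (bigD1 i) //= (bigD1 j) 1?eq_sym //= big1 ?mulr1 //.
by move=> t /andP[ti tj]; rewrite (eq_Edraw (F1 t ti tj)) Edraw1.
Qed.

Lemma prod_Edraw_eq0 n (F : 'I_n -> 'I_M -> R) (i : 'I_n) :
  Edraw (F i) = 0 -> \prod_(t < n) Edraw (F t) = 0.
Proof. by move=> Fi0; rewrite (bigD1 i) //= Fi0 mul0r. Qed.

Lemma Edraws_pair n (i k : 'I_n) (f g : 'I_M -> R) :
  Edraws (fun x => f (x i) * g (x k)) =
  if i == k then Edraw (fun y => f y * g y) else Edraw f * Edraw g.
Proof.
pose F t y := at_coord i f t y * at_coord k g t y.
rewrite (eq_Edraws (g := fun x => \prod_(t < n) F t (x t))); last first.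
  by move=> x; rewrite big_split /= !prod_at_coord.
rewrite Edraws_prod /F /at_coord; case: eqVneq => [<-|ik].
  rewrite (prod_Edraw1 (i := i)) => [|t /negbTE ti y]; last by rewrite ti mulr1.
  by apply: eq_Edraw => y; rewrite eqxx.
rewrite (prod_Edraw2 ik) => [|t /negbTE ti /negbTE tk y]; last by rewrite ti tk mulr1.
congr (_ * _); apply: eq_Edraw => y; rewrite eqxx.
  by rewrite (negbTE ik) mulr1.
by rewrite eq_sym (negbTE ik) mul1r.
Qed.

Lemma Edraws_centred4 n (i j k l : 'I_n) (f1 f2 f3 f4 : 'I_M -> R) :
  i != j -> k != l ->
  Edraw f1 = 0 -> Edraw f2 = 0 -> Edraw f3 = 0 -> Edraw f4 = 0 ->
  Edraws (fun x => f1 (x i) * f2 (x j) * (f3 (x k) * f4 (x l))) =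
  ((k == i) && (l == j))%:R * (Edraw (fun y => f1 y * f3 y) * Edraw (fun y => f2 y * f4 y)) +
  ((k == j) && (l == i))%:R * (Edraw (fun y => f1 y * f4 y) * Edraw (fun y => f2 y * f3 y)).
Proof.
move=> ij kl f1_0 f2_0 f3_0 f4_0.
pose F t y := at_coord i f1 t y * at_coord j f2 t y * (at_coord k f3 t y * at_coord l f4 t y).
rewrite (eq_Edraws (g := fun x => \prod_(t < n) F t (x t))); last first.
  by move=> x; rewrite !big_split /= !prod_at_coord.
have ji : j != i by rewrite eq_sym.
rewrite Edraws_prod; have [/andP[/eqP ki /eqP lj]|not_ij] := boolP ((k == i) && (l == j)).
  subst k l; rewrite (negbTE ij) /= mul1r mul0r addr0.
  rewrite (prod_Edraw2 ij) => [|t /negbTE ti /negbTE tj y].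
    by congr (_ * _); apply: eq_Edraw => y;
      rewrite /F /at_coord eqxx ?(negbTE ij) ?(negbTE ji) ?mulr1 ?mul1r.
  by rewrite /F /at_coord ti tj !mulr1.
have [/andP[/eqP kj /eqP li]|not_ji] := boolP ((k == j) && (l == i)).
  subst k l; rewrite mul0r add0r mul1r.
  rewrite (prod_Edraw2 ij) => [|t /negbTE ti /negbTE tj y].
    by congr (_ * _); apply: eq_Edraw => y;
      rewrite /F /at_coord eqxx ?(negbTE ij) ?(negbTE ji) ?mulr1 ?mul1r.
  by rewrite /F /at_coord ti tj !mulr1.
rewrite !mul0r addr0.
have lk : l != k by rewrite eq_sym.
have Fl0 : l != i -> l != j -> Edraw (F l) = 0.
  move=> /negbTE li /negbTE lj; rewrite -f4_0; apply: eq_Edraw => y.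
  by rewrite /F /at_coord li lj (negbTE lk) eqxx !mul1r.
have [ki|ki] := eqVneq k i.
  apply: (prod_Edraw_eq0 (i := l)); apply: Fl0; first by rewrite -ki.
  by move: not_ij; rewrite ki eqxx.
have [kj|kj] := eqVneq k j.
  apply: (prod_Edraw_eq0 (i := l)); apply: Fl0; last by rewrite -kj.
  by move: not_ji; rewrite kj eqxx.
apply: (prod_Edraw_eq0 (i := k)); rewrite -f3_0; apply: eq_Edraw => y.
by rewrite /F /at_coord (negbTE ki) (negbTE kj) (negbTE kl) eqxx !mul1r mulr1.
Qed.

End ProductLaw.

Lemma sqrB_le (R : realDomainType) (x y : R) : (x - y) ^+ 2 <= 2 * x ^+ 2 + 2 * y ^+ 2.
Proof.
rewrite -subr_ge0; have -> : 2 * x ^+ 2 + 2 * y ^+ 2 - (x - y) ^+ 2 = (x + y) ^+ 2 by ring.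
exact: sqr_ge0.
Qed.

Lemma count_ofE (R : realType) n M (x : {ffun 'I_n -> 'I_M}) m :
  (count_of x m)%:R = \sum_(i < n) ((x i == m)%:R : R).
Proof.
rewrite /count_of -sum1_card natr_sum big_mkcond /=; apply: eq_bigr => i _.
by rewrite inE; case: eqP.
Qed.

Section HoeffdingDecomposition.
Variables (R : realType) (M : nat) (p a : 'I_M -> R) (n : nat).

Definition centred (m y : 'I_M) : R := (y == m)%:R - p m.

Definition lin_coef (m : 'I_M) : R := 2 * a m / (n%:R * p m).

Definition quad_coef (m : 'I_M) : R := a m / (n%:R * (n%:R - 1) * p m ^+ 2).

Definition lin_kernel (y : 'I_M) : R := \sum_(m < M) lin_coef m * centred m y.

Definition quad_kernel (y z : 'I_M) : R :=
  \sum_(m < M) quad_coef m * (centred m y * centred m z).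

Definition lin_part (x : {ffun 'I_n -> 'I_M}) : R := \sum_(i < n) lin_kernel (x i).

Definition quad_part (x : {ffun 'I_n -> 'I_M}) : R :=
  \sum_(i < n) \sum_(j < n) (i != j)%:R * quad_kernel (x i) (x j).

(* [E[h(X, Y)^2]] for two independent draws [X], [Y], with [h = quad_kernel]. *)
Definition quad_moment : R :=
  \sum_(m < M) \sum_(k < M) quad_coef m * quad_coef k *
     Edraw p (fun y => centred m y * centred k y) ^+ 2.

Lemma sum_centred (x : {ffun 'I_n -> 'I_M}) m :
  \sum_(i < n) centred m (x i) = (count_of x m)%:R - n%:R * p m.
Proof. by rewrite sumrB sumr_const card_ord count_ofE mulr_natl. Qed.

Lemma sum_centred_sqr (x : {ffun 'I_n -> 'I_M}) m :
  \sum_(i < n) centred m (x i) ^+ 2 = (count_of x m)%:R * (1 - 2 * p m) + n%:R * p m ^+ 2.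
Proof.
transitivity (\sum_(i < n) ((x i == m)%:R * (1 - 2 * p m) + p m ^+ 2)).
  by apply: eq_bigr => i _; rewrite /centred; case: (x i == m); rewrite /=; ring.
rewrite big_split /= -mulr_suml sumr_const card_ord count_ofE.
by congr (_ + _); rewrite mulr_natl.
Qed.

Lemma stat_decomp (x : {ffun 'I_n -> 'I_M}) : (1 < n)%N -> (forall m, p m != 0) ->
  stat p a x = lin_part x + quad_part x.
Proof.
move=> n_gt1 p_neq0.
have lin_partE : lin_part x = \sum_(m < M) lin_coef m * \sum_(i < n) centred m (x i).
  by rewrite /lin_part exchange_big; apply: eq_bigr => m _; rewrite mulr_sumr.
have quad_partE : quad_part x = \sum_(m < M) quad_coef m *
    \sum_(i < n) \sum_(j < n) (i != j)%:R * (centred m (x i) * centred m (x j)).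
  rewrite /quad_part /quad_kernel.
  under eq_bigr do under eq_bigr do rewrite mulr_sumr.
  under eq_bigr do rewrite exchange_big /=.
  rewrite exchange_big /=; apply: eq_bigr => m _.
  rewrite mulr_sumr; apply: eq_bigr => i _; rewrite mulr_sumr; apply: eq_bigr => j _.
  by rewrite mulrCA.
rewrite lin_partE quad_partE -big_split /=; apply: eq_bigr => m _.
rewrite (sum_offdiag_mul (fun i => centred m (x i))) sum_centred_sqr sum_centred.
have n_neq0 : (n%:R : R) != 0 by rewrite pnatr_eq0 -lt0n ltnW.
have n1_neq0 : (n%:R - 1 : R) != 0.
  by rewrite subr_eq0 (eqr_nat R n 1) neq_ltn n_gt1 orbT.
rewrite /lin_coef /quad_coef; field.
by rewrite n_neq0 n1_neq0 p_neq0.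
Qed.

Hypothesis p_sum1 : \sum_(m < M) p m = 1.

Lemma Edraw_centred m : Edraw p (centred m) = 0.
Proof.
rewrite /Edraw /centred; under eq_bigr do rewrite mulrBr.
by rewrite sumrB -mulr_suml p_sum1 mul1r (eq_bigr _ (fun y _ => mulrC _ _)) sum_delta_l subrr.
Qed.

Lemma Edraw_centredM m k :
  Edraw p (fun y => centred m y * centred k y) = (m == k)%:R * p m - p m * p k.
Proof.
rewrite /Edraw /centred.
transitivity (\sum_(y < M) ((y == m)%:R * ((y == k)%:R * p y) - p k * ((y == m)%:R * p y)
   - p m * ((y == k)%:R * p y) + p m * p k * p y)).
  by apply: eq_bigr => y _; ring.
by rewrite !big_split /= !sumrN -!mulr_sumr !sum_delta_l p_sum1; ring.
Qed.

Lemma lin_kernelE y : lin_kernel y = lin_coef y - Edraw p lin_coef.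
Proof.
rewrite /lin_kernel /centred; under eq_bigr do rewrite mulrBr.
rewrite sumrB (eq_bigr _ (fun m _ => mulrC _ _)) sum_delta_r.
by congr (_ - _); apply: eq_bigr => m _; rewrite mulrC.
Qed.

Lemma Edraw_lin_kernel : Edraw p lin_kernel = 0.
Proof. by rewrite Edraw_sum big1 // => m _; rewrite Edraw_centred mulr0. Qed.

Lemma Edraws_lin_part_sqr :
  Edraws p (fun x : {ffun 'I_n -> 'I_M} => lin_part x ^+ 2) =
  n%:R * Edraw p (fun y => lin_kernel y ^+ 2).
Proof.
transitivity (Edraws p (fun x : {ffun 'I_n -> 'I_M} =>
   \sum_(i < n) \sum_(j < n) lin_kernel (x i) * lin_kernel (x j))).
  apply: eq_Edraws => x; rewrite /lin_part expr2 mulr_suml.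
  by apply: eq_bigr => i _; rewrite mulr_sumr.
rewrite Edraws_sum (eq_bigr (fun=> Edraw p (fun y => lin_kernel y ^+ 2))).
  by rewrite sumr_const card_ord mulr_natl.
move=> i _; rewrite Edraws_sum (bigD1 i) //= (Edraws_pair p_sum1) eqxx.
rewrite big1 ?addr0; first by apply: eq_Edraw => y; rewrite expr2.
by move=> j ij; rewrite (Edraws_pair p_sum1) eq_sym (negbTE ij) Edraw_lin_kernel mul0r.
Qed.

Lemma Edraws_quad_kernelM (i j k l : 'I_n) : i != j -> k != l ->
  Edraws p (fun x => quad_kernel (x i) (x j) * quad_kernel (x k) (x l)) =
  (((k == i) && (l == j))%:R + ((k == j) && (l == i))%:R) * quad_moment.
Proof.
move=> ij kl.
transitivity (Edraws p (fun x : {ffun 'I_n -> 'I_M} => \sum_(m < M) \sum_(m' < M)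
   (quad_coef m * quad_coef m') *
   (centred m (x i) * centred m (x j) * (centred m' (x k) * centred m' (x l))))).
  apply: eq_Edraws => x; rewrite /quad_kernel mulr_suml; apply: eq_bigr => m _.
  by rewrite mulr_sumr; apply: eq_bigr => m' _; rewrite mulrACA.
rewrite Edraws_sum /quad_moment mulr_sumr; apply: eq_bigr => m _.
rewrite Edraws_sum mulr_sumr; apply: eq_bigr => m' _.
by rewrite EdrawsZ (Edraws_centred4 p_sum1) ?Edraw_centred //; ring.
Qed.

Lemma Edraws_quad_part_sqr :
  Edraws p (fun x : {ffun 'I_n -> 'I_M} => quad_part x ^+ 2) =
  2 * n%:R * (n%:R - 1) * quad_moment.
Proof.
transitivity (Edraws p (fun x : {ffun 'I_n -> 'I_M} =>
   \sum_(i < n) \sum_(j < n) \sum_(k < n) \sum_(l < n)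
     ((i != j)%:R * (k != l)%:R) * (quad_kernel (x i) (x j) * quad_kernel (x k) (x l)))).
  apply: eq_Edraws => x; rewrite /quad_part expr2 mulr_suml; apply: eq_bigr => i _.
  rewrite mulr_suml; apply: eq_bigr => j _; rewrite mulr_sumr; apply: eq_bigr => k _.
  by rewrite mulr_sumr; apply: eq_bigr => l _; rewrite mulrACA.
transitivity (\sum_(i < n) \sum_(j < n) (i != j)%:R * (2 * quad_moment)).
  rewrite Edraws_sum; apply: eq_bigr => i _; rewrite Edraws_sum; apply: eq_bigr => j _.
  have [<-|ij] := eqVneq i j.
    rewrite mulr0n mul0r /Edraws big1 // => x _.
    by rewrite [X in _ * X]big1 ?mulr0 // => k _; rewrite big1 // => l _; rewrite !mul0r.
  rewrite mulr1n mul1r -(sum_offdiag_pair R ij) mulr_suml Edraws_sum.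
  apply: eq_bigr => k _; rewrite Edraws_sum mulr_suml; apply: eq_bigr => l _.
  rewrite EdrawsZ mul1r; have [<-|kl] := eqVneq k l; first by rewrite mulr0n !mul0r.
  by rewrite Edraws_quad_kernelM // !mulr1n !mul1r.
under eq_bigr do rewrite -mulr_suml sum_neq.
by rewrite sumr_const card_ord -mulr_natl; ring.
Qed.

Lemma Edraw_lin_kernel_sqr_le :
  Edraw p (fun y => lin_kernel y ^+ 2) <= \sum_(m < M) p m * lin_coef m ^+ 2.
Proof.
have -> : (fun y => lin_kernel y ^+ 2) = fun y => (lin_coef y - Edraw p lin_coef) ^+ 2.
  by apply: funext => y; rewrite lin_kernelE.
exact: Edraw_var_le.
Qed.

Lemma quad_moment_le :
  quad_moment <= 2 * \sum_(m < M) quad_coef m ^+ 2 * p m ^+ 2 +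
                 2 * (\sum_(m < M) `|quad_coef m| * p m ^+ 2) ^+ 2.
Proof.
have -> : 2 * \sum_(m < M) quad_coef m ^+ 2 * p m ^+ 2 +
          2 * (\sum_(m < M) `|quad_coef m| * p m ^+ 2) ^+ 2 =
    \sum_(m < M) \sum_(k < M) ((m == k)%:R * (2 * (`|quad_coef m| * `|quad_coef k|) * p m ^+ 2) +
      2 * (`|quad_coef m| * p m ^+ 2) * (`|quad_coef k| * p k ^+ 2)).
  rewrite expr2 mulr_suml !mulr_sumr -big_split /=; apply: eq_bigr => m _.
  rewrite big_split /= sum_delta_r; congr (_ + _).
    by rewrite -(real_normK (num_real (quad_coef m))) expr2 mulrA.
  by rewrite !mulr_sumr; apply: eq_bigr => k _; rewrite mulrA.
apply: ler_sum => m _; apply: ler_sum => k _; rewrite Edraw_centredM.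
have -> : (m == k)%:R * (2 * (`|quad_coef m| * `|quad_coef k|) * p m ^+ 2) +
    2 * (`|quad_coef m| * p m ^+ 2) * (`|quad_coef k| * p k ^+ 2) =
    `|quad_coef m| * `|quad_coef k| * (2 * ((m == k)%:R * p m ^+ 2) + 2 * (p m * p k) ^+ 2).
  by ring.
have coef_le : quad_coef m * quad_coef k <= `|quad_coef m| * `|quad_coef k|.
  by rewrite -normrM ler_norm.
apply: le_trans (ler_wpM2r (sqr_ge0 _) coef_le) _.
apply: ler_wpM2l; first by rewrite mulr_ge0.
apply: le_trans (sqrB_le _ _) _; rewrite exprMn.
by case: (m == k); rewrite /= ?mulr1n ?mulr0n ?expr1n ?expr0n ?mul1r ?mul0r ?lexx.
Qed.

End HoeffdingDecomposition.

Section SecondMomentBound.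
Variables (R : realType) (M : nat) (p a : 'I_M -> R) (n : nat) (c : R).
Hypotheses (p_sum1 : \sum_(m < M) p m = 1) (n_gt1 : (1 < n)%N).
Hypotheses (c_gt0 : 0 < c) (c_le_np : forall m, c <= n%:R * p m).

Let n_ge2 : (2 : R) <= n%:R.
Proof. by rewrite (ler_nat R 2 n). Qed.

Let n_gt0 : (0 : R) < n%:R.
Proof. by have := n_ge2; lra. Qed.

Let p_gt0 m : 0 < p m.
Proof. by rewrite -(pmulr_rgt0 _ n_gt0); apply: lt_le_trans (c_le_np m). Qed.

Lemma lin_coef_sqr_le m : n%:R * p m * lin_coef p a n m ^+ 2 <= 4 * a m ^+ 2 / c.
Proof.
have np_gt0 : 0 < n%:R * p m by apply: lt_le_trans (c_le_np m).
have -> : n%:R * p m * lin_coef p a n m ^+ 2 = 4 * a m ^+ 2 / (n%:R * p m).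
  by rewrite /lin_coef; field; rewrite (gt_eqF (p_gt0 m)) (gt_eqF n_gt0).
apply: ler_wpM2l; first by rewrite mulr_ge0 // sqr_ge0.
by rewrite lef_pV2 ?posrE.
Qed.

Lemma quad_coef_sqr_le m :
  n%:R * (n%:R - 1) * (quad_coef p a n m ^+ 2 * p m ^+ 2) <= 2 * a m ^+ 2 / c ^+ 2.
Proof.
have n1_gt0 : (0 : R) < n%:R - 1 by have := n_ge2; lra.
have -> : n%:R * (n%:R - 1) * (quad_coef p a n m ^+ 2 * p m ^+ 2) =
    n%:R / (n%:R - 1) * (a m ^+ 2 / (n%:R * p m) ^+ 2).
  by rewrite /quad_coef; field; rewrite (gt_eqF (p_gt0 m)) (gt_eqF n_gt0) (gt_eqF n1_gt0).
rewrite -[X in _ <= X]mulrA; apply: ler_pM.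
- by rewrite divr_ge0 // ltW.
- by rewrite divr_ge0 ?sqr_ge0.
- by rewrite ler_pdivrMr //; have := n_ge2; lra.
apply: ler_wpM2l; first exact: sqr_ge0.
have np_gt0 : 0 < n%:R * p m := lt_le_trans c_gt0 (c_le_np m).
by rewrite lef_pV2 ?posrE ?exprn_gt0 // ler_pXn2r ?nnegrE ?c_le_np // ltW.
Qed.

Lemma quad_coef_norm m :
  `|quad_coef p a n m| * p m ^+ 2 = `|a m| / (n%:R * (n%:R - 1)).
Proof.
have n1_gt0 : (0 : R) < n%:R - 1 by have := n_ge2; lra.
rewrite /quad_coef normrM normfV (ger0_norm (x := _ * _)); last first.
  by rewrite ltW // !mulr_gt0 // exprn_gt0.
by field; rewrite (gt_eqF (p_gt0 m)) (gt_eqF n_gt0) (gt_eqF n1_gt0).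
Qed.

Lemma Edraws_lin_part_sqr_le :
  Edraws p (fun x : {ffun 'I_n -> 'I_M} => lin_part p a x ^+ 2) <=
  4 / c * \sum_(m < M) a m ^+ 2.
Proof.
rewrite Edraws_lin_part_sqr //.
apply: le_trans (_ : _ <= n%:R * \sum_(m < M) p m * lin_coef p a n m ^+ 2) _.
  by apply: ler_wpM2l; [exact: ltW | exact: Edraw_lin_kernel_sqr_le].
rewrite !mulr_sumr; apply: ler_sum => m _.
by rewrite mulrA; apply: le_trans (lin_coef_sqr_le m) _; rewrite mulrAC.
Qed.

Lemma Edraws_quad_part_sqr_le :
  Edraws p (fun x : {ffun 'I_n -> 'I_M} => quad_part p a x ^+ 2) <=
  8 / c ^+ 2 * \sum_(m < M) a m ^+ 2 +
  4 * (\sum_(m < M) `|a m|) ^+ 2 / (n%:R * (n%:R - 1)).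
Proof.
have n1_gt0 : (0 : R) < n%:R - 1 by have := n_ge2; lra.
rewrite Edraws_quad_part_sqr //.
have K_ge0 : 0 <= 2 * n%:R * (n%:R - 1) :> R by rewrite !mulr_ge0 // ltW.
apply: le_trans (ler_wpM2l K_ge0 (quad_moment_le a n p_sum1)) _.
rewrite mulrDr; apply: lerD.
  rewrite !mulr_sumr; apply: ler_sum => m _.
  have -> : 2 * n%:R * (n%:R - 1) * (2 * (quad_coef p a n m ^+ 2 * p m ^+ 2)) =
      4 * (n%:R * (n%:R - 1) * (quad_coef p a n m ^+ 2 * p m ^+ 2)) by ring.
  have -> : 8 / c ^+ 2 * a m ^+ 2 = 4 * (2 * a m ^+ 2 / c ^+ 2) by ring.
  exact: ler_wpM2l (quad_coef_sqr_le m).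
under eq_bigr do rewrite quad_coef_norm.
rewrite -mulr_suml le_eqVlt; apply/orP; left; apply/eqP.
by field; rewrite !gt_eqF.
Qed.

Lemma Edraws_stat_sqr_le :
  Edraws p (fun x : {ffun 'I_n -> 'I_M} => stat p a x ^+ 2) <=
  (8 / c + 16 / c ^+ 2) * \sum_(m < M) a m ^+ 2 +
  8 * (\sum_(m < M) `|a m|) ^+ 2 / (n%:R * (n%:R - 1)).
Proof.
apply: le_trans (_ : _ <= 2 * Edraws p (fun x : {ffun 'I_n -> 'I_M} => lin_part p a x ^+ 2) +
                          2 * Edraws p (fun x : {ffun 'I_n -> 'I_M} => quad_part p a x ^+ 2)) _.
  rewrite -!EdrawsZ -EdrawsD; apply: ler_Edraws => [m|x]; first exact: ltW.
  rewrite (stat_decomp a x n_gt1 (fun m => lt0r_neq0 (p_gt0 m))).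
  by have := sqrB_le (lin_part p a x) (- quad_part p a x); rewrite opprK sqrrN.
apply: le_trans (lerD (ler_wpM2l _ Edraws_lin_part_sqr_le)
                      (ler_wpM2l _ Edraws_quad_part_sqr_le)) _ => //.
have -> : 8 / c + 16 / c ^+ 2 = 2 * (4 / c) + 2 * (8 / c ^+ 2) by ring.
lra.
Qed.

End SecondMomentBound.

Lemma sum_sqr_le_max (R : realType) M (a : 'I_M -> R) :
  \sum_(m < M) a m ^+ 2 <= (\sum_(m < M) `|a m|) * \big[Num.max/0]_(m < M) `|a m|.
Proof.
rewrite mulr_suml; apply: ler_sum => m _.
rewrite -real_normK ?num_real // expr2 ler_wpM2l //.
by apply/bigmax_geP; right; exists m.
Qed.

(* The last term is stated with [n.+1] rather than [n (n - 1)] so that it matches [harmonic n]. *)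
Lemma prob_stat_gt_le (R : realType) M (p a : 'I_M -> R) n (c C eps : R) :
  \sum_(m < M) p m = 1 -> (1 < n)%N -> 0 < c -> (forall m, c <= n%:R * p m) ->
  \sum_(m < M) `|a m| <= C -> 0 < eps ->
  prob_draws p (fun x : {ffun 'I_n -> 'I_M} => eps < `|stat p a x|) <=
  ((8 / c + 16 / c ^+ 2) * C * \big[Num.max/0]_(m < M) `|a m| +
   16 * C ^+ 2 / n.+1%:R) / eps ^+ 2.
Proof.
move=> p_sum1 n_gt1 c_gt0 c_le_np a_le eps_gt0.
have n_ge2 : (2 : R) <= n%:R by rewrite (ler_nat R 2 n).
have p_ge0 m : 0 <= p m.
  by rewrite -(pmulr_rge0 _ (lt_le_trans _ n_ge2)) ?(le_trans (ltW c_gt0)).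
apply: le_trans (prob_draws_gt_le p_ge0 _ eps_gt0) _.
rewrite ler_pM2r ?invr_gt0 ?exprn_gt0 //.
apply: le_trans (Edraws_stat_sqr_le a p_sum1 n_gt1 c_gt0 c_le_np) _.
have S_ge0 : 0 <= \sum_(m < M) `|a m| by apply: sumr_ge0.
apply: lerD.
  rewrite -mulrA; apply: ler_wpM2l; first by rewrite addr_ge0 // divr_ge0 ?exprn_ge0 // ltW.
  apply: le_trans (sum_sqr_le_max a) _; apply: ler_wpM2r a_le.
  exact: bigmax_ge_id.
have nn1_gt0 : (0 : R) < n%:R * (n%:R - 1) by apply: mulr_gt0; lra.
rewrite ler_pdivrMr // mulrAC ler_pdivlMr ?ltr0Sn //.
have S_le : (\sum_(m < M) `|a m|) ^+ 2 <= C ^+ 2.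
  by rewrite ler_pXn2r ?nnegrE // (le_trans S_ge0).
have : n.+1%:R <= 2 * (n%:R * (n%:R - 1)) :> R by rewrite -natr1; nra.
have := sqr_ge0 (\sum_(m < M) `|a m|); nra.
Qed.

Local Open Scope classical_set_scope.

Theorem corollary3 (R : realType) (M : nat -> nat)
  (p : forall n : nat, 'I_(M n) -> R) (alpha : forall n : nat, 'I_(M n) -> R)
  (p_ge0 : forall n m, 0 <= p n m)
  (p_sum1 : forall n, \sum_(m < M n) p n m = 1)
  (* liminf_n n * min_m p_{n,m} > 0 *)
  (p_liminf : exists2 c : R, 0 < c &
     exists N : nat, forall n : nat, (N <= n)%N -> forall m : 'I_(M n), c <= n%:R * p n m)
  (* sum_m |alpha_{n,m}| = O(1) *)
  (alpha_O1 : exists C : R, exists N : nat, forall n : nat, (N <= n)%N ->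
     \sum_(m < M n) `|alpha n m| <= C)
  (* max_m |alpha_{n,m}| -> 0 *)
  (alpha_max : (fun n : nat => \big[Num.max/0]_(m < M n) `|alpha n m|) @ \oo --> 0%R) :
  (* convergence in probability to 0 *)
  forall eps : R, 0 < eps ->
    (fun n : nat => prob_draws (p n) (fun x : {ffun 'I_n -> 'I_(M n)} =>
        eps < `|stat (p n) (alpha n) x|)) @ \oo --> 0%R.
Proof.
move=> eps eps_gt0.
case: p_liminf => c c_gt0 [N1 c_le_np]; case: alpha_O1 => C [N2 alpha_le].
pose mx n := \big[Num.max/0]_(m < M n) `|alpha n m|.
pose K := 8 / c + 16 / c ^+ 2.
apply: (squeeze_cvgr (f := fun=> 0)
  (h := fun n => (K * C * mx n + 16 * C ^+ 2 * harmonic n) / eps ^+ 2)).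
- exists (maxn (maxn N1 N2) 2) => // n /=; rewrite !geq_max => /andP[/andP[n1 n2] n_gt1].
  rewrite prob_draws_ge0 //=.
  exact: prob_stat_gt_le (p_sum1 n) n_gt1 c_gt0 (c_le_np n n1) (alpha_le n n2) eps_gt0.
- exact: cvg_cst.
have := cvgM (cvgD (cvgM (cvg_cst (K * C)) alpha_max)
   (cvgM (cvg_cst (16 * C ^+ 2)) cvg_harmonic)) (cvg_cst (eps ^-2)).
by rewrite !mulr0 addr0 mul0r; apply.
Qed.
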